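(* Let $G$ be a topological group, let $\mathcal{Y}$ be a Hausdorff locally convex space, let $n\ge 1$, and let $\phi\in\mathcal{LUC}_{\rm loc}^n(G,\mathcal{Y})$. Then: (1) For all $g\in G$, $X\in\mathfrak{L}(G)$ and $t\in\mathbb{R}$ one can write $$\phi(gX(t))=\sum_{j=0}^n\frac{t^j}{j!}((D^\lambda_X)^j\phi)(g)+t^n\chi_1(g,X,t),$$ where $\chi_1\colon G\times\mathfrak{L}(G)\times\mathbb{R}\to\mathcal{Y}$ is a function with $\lim_{t\to0}\chi_1(g,X,t)=0$. (2) For all $X_1,X_2\in\mathfrak{L}(G)$, $g\in G$, $t\in\mathbb{R}$ one can write $$\phi(gX_1(t)X_2(t))=\phi(g)+t\big((D^\lambda_{X_1}\phi)(g)+(D^\lambda_{X_2}\phi)(g)\big)+t\chi_2(g,X_1,X_2,t),$$ where $\chi_2\colon G\times\mathfrak{L}(G)\times\mathfrak{L}(G)\times\mathbb{R}\to\mathcal{Y}$ is a function with $\lim_{t\to0}\chi_2(g,X_1,X_2,t)=0$. Moreover, for every $g_0\in G$ (and fixed $X$, respectively fixed $X_1,X_2$) there exists a neighborhood $V_0$ of $g_0$ such that both limits $\lim_{t\to0}\chi_1(g,X,t)=0$ and $\lim_{t\to0}\chi_2(g,X_1,X_2,t)=0$ hold uniformly for $g\in V_0$.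
   Context: All topological groups and locally convex spaces are Hausdorff. $\mathfrak{L}(G)$ denotes the set of one-parameter subgroups of $G$, i.e. continuous homomorphisms $X\colon(\mathbb{R},+)\to G$. For $\phi\colon G\to\mathcal{Y}$, $X\in\mathfrak{L}(G)$, $g\in G$, set $(D^\lambda_X\phi)(g)=\lim_{t\to0}\frac{\phi(gX(t))-\phi(g)}{t}$ whenever the limit exists. $\mathcal{LUC}_{\rm loc}(G,\mathcal{Y})$ is the set of all $\phi\colon G\to\mathcal{Y}$ such that every $g_0\in G$ has a neighborhood $V$ on which $\phi$ is left uniformly continuous: for every neighborhood $U$ of $0\in\mathcal{Y}$ there is a neighborhood $W$ of $\mathbf{1}\in G$ such that $x,y\in V$, $x^{-1}y\in W$ imply $\phi(x)-\phi(y)\in U$. $\mathcal{LUC}^1_{\rm loc}(G,\mathcal{Y})$ is the set of $\phi\in\mathcal{LUC}_{\rm loc}(G,\mathcal{Y})$ such that $D^\lambda_X\phi(g)$ exists for all $X\in\mathfrak{L}(G)$, $g\in G$, and $D^\lambda_X\phi\in\mathcal{LUC}_{\rm loc}(G,\mathcal{Y})$ for every $X$; inductively, $\mathcal{LUC}^n_{\rm loc}(G,\mathcal{Y})$ is the set of $\phi\in\mathcal{LUC}^{n-1}_{\rm loc}(G,\mathcal{Y})$ such that all iterated derivatives $D^\lambda_{X_1}(D^\lambda_{X_2}\cdots(D^\lambda_{X_n}\phi)\cdots)$ exist everywhere and belong to $\mathcal{LUC}_{\rm loc}(G,\mathcal{Y})$ for all $X_1,\dots,X_n\in\mathfrak{L}(G)$.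 $(D^\lambda_X)^j$ denotes the $j$-fold iterate, $(D^\lambda_X)^0\phi=\phi$. *)

From HB Require Import structures.
From mathcomp Require Import all_boot all_order all_algebra.
From mathcomp Require Import all_classical all_reals all_analysis.
Set Implicit Arguments. Unset Strict Implicit. Unset Printing Implicit Defensive.
Import Order.TTheory GRing.Theory Num.Theory.
Import numFieldNormedType.Exports.
Local Open Scope classical_set_scope.
Local Open Scope ring_scope.

Definition is_topological_group (G : topologicalType)
    (mul : G -> G -> G) (inv : G -> G) (one : G) : Prop :=
  [/\ (forall x y z, mul x (mul y z) = mul (mul x y) z),
      (forall x, mul one x = x /\ mul x one = x),
      (forall x, mul (inv x) x = one /\ mul x (inv x) = one),
      continuous (fun p : G * G => mul p.1 p.2) &
      continuous inv /\ hausdorff_space G].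

Definition one_param_subgroup (R : realType) (G : topologicalType)
    (mul : G -> G -> G) (X : R -> G) : Prop :=
  continuous X /\ (forall s t : R, X (s + t) = mul (X s) (X t)).

Section Defs.
Context (R : realType) (G : topologicalType) (Y : tvsType R).
Context (mul : G -> G -> G) (inv : G -> G) (one : G).

Definition ldiffq (phi : G -> Y) (X : R -> G) (g : G) : R -> Y :=
  fun t => t^-1 *: (phi (mul g (X t)) - phi g).

Definition lderivable (phi : G -> Y) (X : R -> G) (g : G) : Prop :=
  exists l : Y, ldiffq phi X g @ (0 : R)^' --> l.

(* (the limit is unique since Y is Hausdorff; xget 0 is how [lim] is defined) *)
Definition Dl (phi : G -> Y) (X : R -> G) : G -> Y :=
  fun g => xget (0 : Y) (fun l : Y => ldiffq phi X g @ (0 : R)^' --> l).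

Definition iterDl (Xs : seq (R -> G)) (phi : G -> Y) : G -> Y :=
  foldr (fun X psi => Dl psi X) phi Xs.

Definition Dl_pow (j : nat) (X : R -> G) (phi : G -> Y) : G -> Y :=
  iterDl (nseq j X) phi.

Definition luc_on (V : set G) (phi : G -> Y) : Prop :=
  forall U : set Y, nbhs (0 : Y) U ->
    exists2 W : set G, nbhs one W &
      forall x y, V x -> V y -> W (mul (inv x) y) -> U (phi x - phi y).

Definition LUC_loc (phi : G -> Y) : Prop :=
  forall g0 : G, exists2 V : set G, nbhs g0 V & luc_on V phi.

Fixpoint LUCn_loc (n : nat) (phi : G -> Y) : Prop :=
  match n with
  | 0 => LUC_loc phi
  | k.+1 => LUCn_loc k phi /\
      forall Xs : seq (R -> G), size Xs = k.+1 ->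
        (forall X, X \in Xs -> one_param_subgroup mul X) ->
        (forall g, lderivable (iterDl (behead Xs) phi) (head (fun _ => one) Xs) g)
        /\ LUC_loc (iterDl Xs phi)
  end.

End Defs.

(* The remainder of
   order n + 1 of phi, as a function of t, has derivative the remainder of order n
   of D_X phi; by the induction hypothesis the latter lies in s^n B for |s| <= |t|
   and B a convex symmetric neighbourhood of 0, so a mean value inequality (which
   needs local convexity of Y) puts the former in t^(n+1) B.  The case n = 0 is
   local left uniform continuity.  For the second formula one passes from g to
   g X1(t) X2(t) through g X1(t), using first order remainders at g and g X1(t)
   and the uniform continuity of D_X2 phi. *)

From HB Require Import structures.
From mathcomp Require Import all_boot all_order all_algebra.
From mathcomp Require Import all_classical all_reals all_analysis.
From mathcomp Require Import ring lra.
Import Order.TTheory GRing.Theory Num.Theory.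
Import numFieldNormedType.Exports.
Set Implicit Arguments. Unset Strict Implicit. Unset Printing Implicit Defensive.
Local Open Scope classical_set_scope.
Local Open Scope ring_scope.

Lemma near0P (R : realType) (P : R -> Prop) : (\forall h \near (0 : R)^', P h) <->
  exists2 d : R, 0 < d & forall h, h != 0 -> `|h| < d -> P h.
Proof.
split.
  move=> /nbhs_ballP [d d0 Hd]; exists d => // h h0 hd; apply: Hd => //.
  by rewrite /ball /= sub0r normrN.
move=> [d d0 Hd]; apply/nbhs_ballP; exists d => // h.
by rewrite /ball /= sub0r normrN => hd h0; apply: Hd.
Qed.

Section TvsFacts.
Context (R : realType) (Y : tvsType R).

Lemma cvgZ_tvs T (F : set_system T) {FF : Filter F} (f : T -> R) (g : T -> Y) (a : R) (b : Y) :
  f @ F --> a -> g @ F --> b -> (fun x => f x *: g x) @ F --> a *: b.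
Proof.
move=> fa gb.
exact: (@continuous2_cvg _ (R^o : topologicalType) _ _ _ _ f g (fun x y => x *: y) a b
  (scale_continuous (a, b))).
Qed.

Lemma cvgB_tvs T (F : set_system T) {FF : Filter F} (f g : T -> Y) (a b : Y) :
  f @ F --> a -> g @ F --> b -> (fun x => f x - g x) @ F --> a - b.
Proof.
move=> fa gb.
exact: (@continuous2_cvg _ _ _ _ _ _ f g (fun x y => x - y) a b (@sub_continuous Y (a, b))).
Qed.

Lemma nbhs0_add_split (U : set Y) : nbhs (0 : Y) U ->
  exists2 V : set Y, nbhs (0 : Y) V & forall x y, V x -> V y -> U (x + y).
Proof.
move=> U0; have := @add_continuous Y (0, 0) U; rewrite /= addr0.
move=> /(_ U0) [[A B]] /= [A0 B0] AB; exists (A `&` B); first exact: filterI.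
by move=> x y [Ax _] [_ By]; apply: (AB (x, y)).
Qed.

Definition segment_closed (B : set Y) := forall x y (l : R),
  B x -> B y -> 0 <= l -> l <= 1 -> B (l *: x + (1 - l) *: y).

Definition symmetric_set (B : set Y) := forall x, B x -> B (- x).

Lemma nbhs0_convex_symmetric (U : set Y) : nbhs (0 : Y) U ->
  exists B : set Y, [/\ B `<=` U, open B, B 0, segment_closed B & symmetric_set B].
Proof.
move=> U0; case: (@locally_convex R Y) => Bs Bs_convex [Bs_open Bs_basis].
have [b [Bs_b b0] bU] := Bs_basis 0 U U0.
have b_convex : segment_closed b.
  move=> x y l bx hy l0 l1.
  have := Bs_convex b (mem_set Bs_b) x y (Itv01 l0 l1) (mem_set bx) (mem_set hy).
  by rewrite inE.
exists (b `&` [set x | b (- x)]); split.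
- by move=> x [bx _]; exact: bU.
- apply: openI; first exact: Bs_open.
  by apply: open_comp (Bs_open _ Bs_b) => x _; exact: opp_continuous.
- by split => //=; rewrite oppr0.
- move=> x y l [bx bnx] [hy bny] l0 l1; split; first exact: b_convex.
  by rewrite /= opprD -!scalerN; apply: b_convex.
- by move=> x [bx bnx]; split => //=; rewrite opprK.
Qed.

Lemma segment_closed_scale (B : set Y) : segment_closed B -> B 0 -> symmetric_set B ->
  forall x (l : R), B x -> `|l| <= 1 -> B (l *: x).
Proof.
move=> Bc B0 BN x l Bx l1.
have Bscale m z : B z -> 0 <= m -> m <= 1 -> B (m *: z).
  by move=> Bz m0 m1; have := Bc z 0 m Bz B0 m0 m1; rewrite scaler0 addr0.
have [l0|l0] := leP 0 l; first by apply: Bscale => //; rewrite -(ger0_norm l0).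
rewrite -[l]opprK scaleNr -scalerN; apply: Bscale; first exact: BN.
- by rewrite oppr_ge0 ltW.
- by rewrite -(ltr0_norm l0).
Qed.

End TvsFacts.

Section MeanValue.
Context (R : realType) (Y : tvsType R) (B : set Y).
Hypotheses (B_convex : segment_closed B) (B0 : B 0) (B_sym : symmetric_set B).

Definition slope_in (c : R -> Y) (u v : R) := exists2 w, B w & c v - c u = (v - u) *: w.

Lemma slope_in_refl c u : slope_in c u u.
Proof. by exists 0 => //; rewrite !subrr scale0r. Qed.

(* The two slopes are recombined with the weight [(v - u) / (z - u)]. *)
Lemma slope_in_trans c u v z : u <= v -> v <= z ->
  slope_in c u v -> slope_in c v z -> slope_in c u z.
Proof.
move=> uv vz [w1 Bw1 e1] [w2 Bw2 e2].
have [zu|zu] := eqVneq z u.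
  have vu : v = u by apply/eqP; rewrite eq_le uv -zu vz.
  by exists w2 => //; move: e2; rewrite zu vu.
have zu0 : 0 < z - u by rewrite subr_gt0 lt_neqAle eq_sym zu (le_trans uv vz).
set l := (v - u) / (z - u).
have l0 : 0 <= l by apply: divr_ge0; [rewrite subr_ge0 | exact: ltW].
have l1 : l <= 1 by rewrite ler_pdivrMr // mul1r lerD2r.
exists (l *: w1 + (1 - l) *: w2); first exact: B_convex.
rewrite -(subrK (c v) (c z)) -addrA e1 e2 scalerDr !scalerA addrC.
congr (_ *: _ + _ *: _); rewrite /l; field; exact: lt0r_neq0.
Qed.

Lemma slope_in_near (c : R -> Y) (s : R) :
  (\forall h \near (0 : R)^', B (h^-1 *: (c (s + h) - c s))) ->
  exists2 d : R, 0 < d & forall h, 0 <= h -> h < d ->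
    slope_in c s (s + h) /\ slope_in c (s - h) s.
Proof.
move=> /near0P [d d0 Hd]; exists d => // h h0 hd.
have [->|hn0] := eqVneq h 0.
  by rewrite addr0 subr0; split; apply: slope_in_refl.
have hlt : `|h| < d by rewrite ger0_norm.
split.
  exists (h^-1 *: (c (s + h) - c s)); first exact: Hd.
  by rewrite [s + h - s]addrC addKr scalerA mulfV // scale1r.
exists ((- h)^-1 *: (c (s + - h) - c s)); first by apply: Hd; rewrite ?oppr_eq0 ?normrN.
have -> : s - (s - h) = h by rewrite opprB addrC subrK.
by rewrite scalerA invrN mulrN mulfV // scaleN1r opprB.
Qed.

(* Let [s] be the supremum of the points of [[0, a]] reached from [0]; local
   slopes at [s] reach [s] and, unless [s] is close to [a], go beyond it. *)
Lemma slope_in_interval (c : R -> Y) a : 0 <= a ->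
  (forall s, 0 <= s -> s <= a ->
     \forall h \near (0 : R)^', B (h^-1 *: (c (s + h) - c s))) ->
  slope_in c 0 a.
Proof.
move=> a0 Hloc.
pose A := [set x : R | [/\ 0 <= x, x <= a & slope_in c 0 x]].
have hsA : has_sup A by split; [exists 0; split=> //; apply: slope_in_refl | exists a => x []].
set s := sup A; have sE : s = sup A by []; clearbody s.
have s0 : 0 <= s by rewrite sE; apply: sup_upper_bound => //; split=> //; apply: slope_in_refl.
have sa : s <= a.
  by rewrite sE; apply: ge_sup; [exists 0; split=> //; apply: slope_in_refl | move=> x []].
have [d d0 Hd] := slope_in_near (Hloc s s0 sa).
have [x [x0 xa Px] sx] := sup_adherent d0 hsA; rewrite -sE in sx.
have xs : x <= s by rewrite sE; apply: sup_upper_bound.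
have [_ Pxs] := Hd (s - x) ltac:(lra) ltac:(lra).
rewrite opprB addrC subrK in Pxs.
have Ps : slope_in c 0 s := slope_in_trans x0 xs Px Pxs.
have [ad|da] := lerP a (s + d / 2).
  have [Psa _] := Hd (a - s) ltac:(lra) ltac:(lra).
  by rewrite addrC subrK in Psa; exact: slope_in_trans s0 sa Ps Psa.
have [Psd _] := Hd (d / 2) ltac:(lra) ltac:(lra).
have : A (s + d / 2) by split; [lra | lra | apply: slope_in_trans s0 _ Ps Psd; lra].
by move/(sup_upper_bound hsA); rewrite -sE; lra.
Qed.

Lemma mean_value_incl (c : R -> Y) (t : R) :
  (forall s, `|s| <= `|t| -> \forall h \near (0 : R)^', B (h^-1 *: (c (s + h) - c s))) ->
  exists2 w, B w & c t - c 0 = t *: w.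
Proof.
move=> Hloc; have [t0|t0] := leP 0 t.
  have [|w Bw e] := @slope_in_interval c t t0; last by exists w; rewrite // e subr0.
  by move=> s s0 st; apply: Hloc; rewrite !ger0_norm.
have [||w Bw e] := @slope_in_interval (fun s => c (- s)) (- t).
- by rewrite oppr_ge0 ltW.
- move=> s s0 st; have := Hloc (- s).
  rewrite normrN ger0_norm // ltr0_norm // => /(_ st) /near0P [d d0 Hd].
  apply/near0P; exists d => // h h0 hd; rewrite opprD.
  have := Hd (- h); rewrite oppr_eq0 normrN => /(_ h0 hd) /B_sym.
  by rewrite invrN scaleNr opprK.
- exists (- w); first exact: B_sym.
  by move: e; rewrite oppr0 opprK addr0 => ->; rewrite scaleNr scalerN.
Qed.

End MeanValue.

Lemma cvg_exprn_diffq (R : realType) (s : R) (j : nat) :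
  (fun h : R => h^-1 * ((s + h) ^+ j - s ^+ j)) @ (0 : R)^' --> j%:R * s ^+ j.-1.
Proof.
have D := @is_deriveX R R^o id j s 1 1 (is_derive_id s 1).
have /cvg_ex [l Hl] := @ex_derive _ _ _ _ _ _ _ D.
have -> : j%:R * s ^+ j.-1 = l.
  rewrite -[LHS]mulr1 -[_ * 1]/(_ *: 1) -(@derive_val _ _ _ _ _ _ _ D).
  exact: cvg_lim.
apply: cvg_trans Hl; apply: near_eq_cvg; near=> h.
by rewrite /= /GRing.scale /= mulr1 !exprfctE (addrC h).
Unshelve. all: by end_near.
Qed.

Lemma exprn_fact_deriv (R : realType) (s : R) (i : nat) :
  i.+1%:R * s ^+ i / (i.+1`!)%:R = s ^+ i / (i`!)%:R.
Proof.
have fact_neq0 : (i`!)%:R != 0 :> R by rewrite pnatr_eq0 -lt0n fact_gt0.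
by rewrite factS natrM; field; rewrite fact_neq0 addrC natr1 pnatr_eq0.
Qed.

Lemma cvg_taylor_poly_diffq (R : realType) (Y : tvsType R) (s : R) (m : nat) (v : nat -> Y) :
  (fun h : R => h^-1 *: (\sum_(j < m.+2) ((s + h) ^+ j / (j`!)%:R) *: v j
                         - \sum_(j < m.+2) (s ^+ j / (j`!)%:R) *: v j))
  @ (0 : R)^' --> \sum_(j < m.+1) (s ^+ j / (j`!)%:R) *: v j.+1.
Proof.
have -> : (fun h : R => h^-1 *: (\sum_(j < m.+2) ((s + h) ^+ j / (j`!)%:R) *: v j
                         - \sum_(j < m.+2) (s ^+ j / (j`!)%:R) *: v j)) =
   (fun h : R => \sum_(j < m.+2) ((h^-1 * ((s + h) ^+ j - s ^+ j)) / (j`!)%:R) *: v j).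
  apply/funext => h; rewrite -sumrB scaler_sumr; apply: eq_bigr => j _.
  by rewrite -scalerBl scalerA mulrBr mulrBr mulrBl !mulrA.
have -> : \sum_(j < m.+1) (s ^+ j / (j`!)%:R) *: v j.+1 =
          \sum_(j < m.+2) ((j%:R * s ^+ j.-1) / (j`!)%:R) *: v j.
  rewrite [RHS]big_ord_recl /= !mul0r scale0r add0r.
  by apply: eq_bigr => i _; rewrite exprn_fact_deriv.
apply: cvg_big => //; first exact: add_continuous.
move=> j _; apply: cvgZ_tvs; last exact: cvg_cst.
by apply: cvgM; [exact: cvg_exprn_diffq | exact: cvg_cst].
Qed.

Lemma addr_sub_telescope (V : zmodType) (u v w a b d : V) :
  u - w - (a + d) = (u - (v + b) + (b - d)) + (v - (w + a)).
Proof.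
have -> : u - (v + b) + (b - d) = u - v - d by rewrite opprD !addrA subrK.
by rewrite [- (w + a)]opprD [RHS]addrAC [u - v + _]addrA subrK opprD !addrA.
Qed.

Section TopologicalGroup.
Context (R : realType) (G : topologicalType) (Y : tvsType R).
Context (mul : G -> G -> G) (inv : G -> G) (one : G).
Hypothesis HG : is_topological_group mul inv one.

Let mulA x y z : mul x (mul y z) = mul (mul x y) z.
Proof. by case: HG. Qed.
Let mul1g x : mul one x = x.
Proof. by case: HG => _ h; case: (h x). Qed.
Let mulg1 x : mul x one = x.
Proof. by case: HG => _ h; case: (h x). Qed.
Let mulVg x : mul (inv x) x = one.
Proof. by case: HG => _ _ h; case: (h x). Qed.

Lemma one_param_subgroup0 (X : R -> G) : one_param_subgroup mul X -> X 0 = one.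
Proof.
case=> _ XD; have e := XD 0 0; rewrite addr0 in e.
have : mul (inv (X 0)) (X 0) = mul (inv (X 0)) (mul (X 0) (X 0)) by rewrite -e.
by rewrite mulA mulVg mul1g.
Qed.

Lemma mul_one_param_subgroupD g (X : R -> G) s h : one_param_subgroup mul X ->
  mul g (X (s + h)) = mul (mul g (X s)) (X h).
Proof. by case=> _ XD; rewrite XD mulA. Qed.

Lemma near0_one_param_subgroup (X : R -> G) (W : set G) :
  one_param_subgroup mul X -> nbhs one W -> \forall t \near (0 : R)^', W (X t).
Proof.
move=> hX W1; have := (proj1 hX) 0 W; rewrite (one_param_subgroup0 hX) => /(_ W1).
move=> /nbhs_ballP [d d0 Hd]; apply/near0P; exists d => // h _ hd.
by apply: Hd; rewrite /ball /= sub0r normrN.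
Qed.

Lemma nbhs_mul_split (g0 : G) (V : set G) : nbhs g0 V -> exists V0 W : set G,
  [/\ nbhs g0 V0, nbhs one W, V0 `<=` V & forall g w, V0 g -> W w -> V (mul g w)].
Proof.
case: HG => _ _ _ mul_cont _ V0.
have := @mul_cont (g0, one) V; rewrite /= mulg1 => /(_ V0) [[A B] /= [A0 B0] AB].
exists (A `&` V), B; split.
- exact: filterI.
- exact: B0.
- by move=> x [].
- by move=> g w [Ag _] Bw; apply: (AB (g, w)).
Qed.

Definition unif_cvg0_near (f : G -> R -> Y) (g0 : G) : Prop :=
  exists2 V0 : set G, nbhs g0 V0 & forall U : set Y, nbhs (0 : Y) U ->
    \forall t \near (0 : R)^', forall g, V0 g -> U (f g t).

Lemma unif_cvg0_near_cvg (f : G -> R -> Y) (g0 : G) :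
  unif_cvg0_near f g0 -> f g0 t @[t --> (0 : R)^'] --> (0 : Y).
Proof.
move=> [V0 V00 HV] U U0; have := HV U U0; apply: filterS => t Ht.
exact: Ht g0 (nbhs_singleton V00).
Qed.

Lemma luc_loc_unif_cvg0 (psi : G -> Y) (X : R -> G) (g0 : G) :
  one_param_subgroup mul X -> LUC_loc mul inv one psi ->
  unif_cvg0_near (fun g t => psi (mul g (X t)) - psi g) g0.
Proof.
move=> hX Hpsi; have [V V1 Vluc] := Hpsi g0.
have [V0 [W' [V00 W'1 V0V V0W]]] := nbhs_mul_split V1.
exists V0 => // U U0; have [W W1 HW] := Vluc _ (nbhs0N U0).
near=> t => g Vg.
have Wt : W' (X t) by near: t; exact: near0_one_param_subgroup.
have Wt2 : W (X t) by near: t; exact: near0_one_param_subgroup.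
have := HW g (mul g (X t)) (V0V _ Vg) (V0W _ _ Vg Wt).
rewrite mulA mulVg mul1g => /(_ Wt2) [u Uu e].
by rewrite -[_ - _]opprB -e opprK.
Unshelve. all: by end_near.
Qed.

Lemma lderivable_cvg (psi : G -> Y) (X : R -> G) (g : G) : lderivable mul psi X g ->
  ldiffq mul psi X g @ (0 : R)^' --> Dl mul psi X g.
Proof. exact: xgetPex. Qed.

Lemma Dl_powSr j (X : R -> G) (psi : G -> Y) :
  Dl_pow mul j X (Dl mul psi X) = Dl_pow mul j.+1 X psi.
Proof. by rewrite /Dl_pow /iterDl; elim: j => //= j ->. Qed.

Definition taylor_rem (n : nat) (psi : G -> Y) (X : R -> G) (g : G) (t : R) : Y :=
  psi (mul g (X t)) - \sum_(j < n.+1) ((t ^+ j / (j`!)%:R) *: Dl_pow mul j X psi g).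

Lemma taylor_rem0 n psi X g : one_param_subgroup mul X -> taylor_rem n psi X g 0 = 0.
Proof.
move=> hX; rewrite /taylor_rem (one_param_subgroup0 hX) mulg1 big_ord_recl /=.
rewrite expr0 div1r invr1 scale1r big1 ?addr0 ?subrr // => i _.
by rewrite expr0n /= mul0r scale0r.
Qed.

Lemma cvg_taylor_rem_diffq n (psi : G -> Y) (X : R -> G) g s :
  one_param_subgroup mul X -> lderivable mul psi X (mul g (X s)) ->
  (fun h => h^-1 *: (taylor_rem n.+1 psi X g (s + h) - taylor_rem n.+1 psi X g s))
    @ (0 : R)^' --> taylor_rem n (Dl mul psi X) X g s.
Proof.
move=> hX psi_der.
pose P u := \sum_(j < n.+2) (u ^+ j / (j`!)%:R) *: Dl_pow mul j X psi g.
have -> : (fun h => h^-1 *: (taylor_rem n.+1 psi X g (s + h) - taylor_rem n.+1 psi X g s))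
    = (fun h => ldiffq mul psi X (mul g (X s)) h - h^-1 *: (P (s + h) - P s)).
  apply/funext => h; rewrite /taylor_rem /ldiffq -scalerBr.
  by rewrite (mul_one_param_subgroupD g s h hX) !opprD addrACA.
apply: cvgB_tvs; first exact: lderivable_cvg.
have -> : \sum_(j < n.+1) (s ^+ j / (j`!)%:R) *: Dl_pow mul j X (Dl mul psi X) g =
          \sum_(j < n.+1) (s ^+ j / (j`!)%:R) *: Dl_pow mul j.+1 X psi g.
  by apply: eq_bigr => j _; rewrite Dl_powSr.
exact: (cvg_taylor_poly_diffq (v := fun j => Dl_pow mul j X psi g)).
Qed.

Definition taylor_hyp (n : nat) (psi : G -> Y) (X : R -> G) : Prop :=
  (forall j, (j <= n)%N -> LUC_loc mul inv one (Dl_pow mul j X psi)) /\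
  (forall j, (j < n)%N -> forall g, lderivable mul (Dl_pow mul j X psi) X g).

Lemma taylor_hypS n psi X : taylor_hyp n.+1 psi X -> taylor_hyp n (Dl mul psi X) X.
Proof. by move=> [luc der]; split=> j hj; rewrite Dl_powSr; [exact: luc | exact: der]. Qed.

(* For [|s| <= |t|] the derivative [t ^- n *: taylor_rem n (D_X psi) X g s] of
   [t ^- n *: taylor_rem n.+1 psi X g] is [(s / t) ^+ n] times a point of [B]. *)
Lemma taylor_rem_succ_incl n (psi : G -> Y) (X : R -> G) g t (B : set Y) :
  one_param_subgroup mul X -> (forall g, lderivable mul psi X g) ->
  open B -> segment_closed B -> B 0 -> symmetric_set B -> t != 0 ->
  (forall s, s != 0 -> `|s| <= `|t| -> B (s ^- n *: taylor_rem n (Dl mul psi X) X g s)) ->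
  B (t ^- n.+1 *: taylor_rem n.+1 psi X g t).
Proof.
move=> hX psi_der B_open B_convex B0 B_sym t0 Brem.
pose c s := t ^- n *: taylor_rem n.+1 psi X g s.
have [w Bw e] : exists2 w, B w & c t - c 0 = t *: w.
  apply: (mean_value_incl B_convex B0 B_sym) => s st.
  have Bs : B (t ^- n *: taylor_rem n (Dl mul psi X) X g s).
    have [->|s0] := eqVneq s 0; first by rewrite taylor_rem0 // scaler0.
    have -> : t ^- n *: taylor_rem n (Dl mul psi X) X g s =
        (t ^- n * s ^+ n) *: (s ^- n *: taylor_rem n (Dl mul psi X) X g s).
      by rewrite scalerA mulfK // expf_neq0.
    apply: segment_closed_scale (Brem s s0 st) _ => //.
    rewrite -exprVn -exprMn normrX exprn_ile1 // normrM normfV mulrC.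
    by rewrite ler_pdivrMr ?mul1r // normr_gt0.
  have c_diffq : (fun h => h^-1 *: (c (s + h) - c s)) @ (0 : R)^' -->
                 t ^- n *: taylor_rem n (Dl mul psi X) X g s.
    have -> : (fun h => h^-1 *: (c (s + h) - c s)) = (fun h => t ^- n *:
        (h^-1 *: (taylor_rem n.+1 psi X g (s + h) - taylor_rem n.+1 psi X g s))).
      by apply/funext => h; rewrite -scalerBr !scalerA mulrC.
    apply: cvgZ_tvs; first exact: cvg_cst.
    exact: cvg_taylor_rem_diffq.
  exact: c_diffq B (open_nbhs_nbhs (conj B_open Bs)).
move: e; rewrite /c taylor_rem0 // scaler0 subr0 => e.
by rewrite exprS invfM -scalerA e scalerA mulVf // scale1r.
Qed.

Lemma taylor_rem_unif n (psi : G -> Y) (X : R -> G) (g0 : G) :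
  one_param_subgroup mul X -> taylor_hyp n psi X ->
  unif_cvg0_near (fun g t => t ^- n *: taylor_rem n psi X g t) g0.
Proof.
elim: n psi => [|n IH] psi hX [psi_luc psi_der].
  have [V0 V00 HV] := luc_loc_unif_cvg0 g0 hX (psi_luc 0%N (leqnn 0)).
  exists V0 => // U U0; apply: filterS (HV U U0) => t Ht g Vg.
  rewrite expr0 invr1 scale1r /taylor_rem big_ord1 expr0 divr1 scale1r.
  exact: Ht.
have [V0 V00 HV] := IH (Dl mul psi X) hX (taylor_hypS (conj psi_luc psi_der)).
exists V0 => // U U0.
have [B [BU B_open B0 B_convex B_sym]] := nbhs0_convex_symmetric U0.
have /near0P [d d0 Hd] := HV B (open_nbhs_nbhs (conj B_open B0)).
apply/near0P; exists d => // t t0 td g Vg; apply: BU.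
apply: taylor_rem_succ_incl => // [|s s0 st]; first exact: (psi_der 0%N).
exact: Hd s s0 (le_lt_trans st td) g Vg.
Qed.

Lemma LUCn_loc_le n m (psi : G -> Y) : (m <= n)%N ->
  LUCn_loc mul inv one n psi -> LUCn_loc mul inv one m psi.
Proof.
elim: n => [|n IH]; first by rewrite leqn0 => /eqP ->.
by rewrite leq_eqVlt => /predU1P [-> //|mn [psi_n _]]; apply: IH.
Qed.

Lemma LUCn_loc_taylor_hyp n (psi : G -> Y) (X : R -> G) :
  one_param_subgroup mul X -> LUCn_loc mul inv one n psi -> taylor_hyp n psi X.
Proof.
move=> hX psi_n.
have Dl_powS_hyp j : (j < n)%N -> (forall g, lderivable mul (Dl_pow mul j X psi) X g) /\
    LUC_loc mul inv one (Dl_pow mul j.+1 X psi).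
  move=> jn; have [_ /(_ (nseq j.+1 X))] := LUCn_loc_le jn psi_n.
  rewrite size_nseq; apply=> // Z; rewrite mem_nseq => /andP [_ /eqP ->] //.
split=> [[|j] jn|j jn]; first exact: LUCn_loc_le (leq0n n) psi_n.
- exact: (Dl_powS_hyp j jn).2.
- exact: (Dl_powS_hyp j jn).1.
Qed.

Lemma taylor_expansion n (psi : G -> Y) (X : R -> G) g t : one_param_subgroup mul X ->
  psi (mul g (X t)) = \sum_(j < n.+1) ((t ^+ j / (j`!)%:R) *: Dl_pow mul j X psi g)
                      + t ^+ n *: (t ^- n *: taylor_rem n psi X g t).
Proof.
move=> hX; have [->|t0] := eqVneq t 0.
  have rem0 := taylor_rem0 n psi g hX.
  rewrite rem0 !scaler0 addr0; apply/eqP; rewrite -subr_eq0; exact/eqP/rem0.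
by rewrite scalerA mulfV ?expf_neq0 // scale1r /taylor_rem addrC subrK.
Qed.

Definition mixed_rem (psi : G -> Y) (X1 X2 : R -> G) (g : G) (t : R) : Y :=
  t^-1 *: (psi (mul (mul g (X1 t)) (X2 t)) - psi g - t *: (Dl mul psi X1 g + Dl mul psi X2 g)).

Lemma mixed_expansion (psi : G -> Y) (X1 X2 : R -> G) g t :
  one_param_subgroup mul X1 -> one_param_subgroup mul X2 ->
  psi (mul (mul g (X1 t)) (X2 t)) =
    psi g + t *: (Dl mul psi X1 g + Dl mul psi X2 g) + t *: mixed_rem psi X1 X2 g t.
Proof.
move=> hX1 hX2; have [->|t0] := eqVneq t 0.
  by rewrite (one_param_subgroup0 hX1) (one_param_subgroup0 hX2) !mulg1 !scale0r !addr0.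
rewrite /mixed_rem scalerA mulfV // scale1r.
by rewrite -[X in _ = _ + X]addrA -opprD [RHS]addrC subrK.
Qed.

Lemma taylor_rem1E (psi : G -> Y) (X : R -> G) g t :
  taylor_rem 1 psi X g t = psi (mul g (X t)) - (psi g + t *: Dl mul psi X g).
Proof. by rewrite /taylor_rem big_ord_recl big_ord1 /= expr0 expr1 !divr1 !scale1r. Qed.

(* Going from [g] to [g X1(t) X2(t)] through [g X1(t)]. *)
Lemma mixed_remE (psi : G -> Y) (X1 X2 : R -> G) g t : t != 0 ->
  mixed_rem psi X1 X2 g t =
    (t^-1 *: taylor_rem 1 psi X2 (mul g (X1 t)) t
     + (Dl mul psi X2 (mul g (X1 t)) - Dl mul psi X2 g))
    + t^-1 *: taylor_rem 1 psi X1 g t.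
Proof.
move=> t0; rewrite /mixed_rem !taylor_rem1E.
rewrite !scalerBr !scalerDr !scalerA !mulVf // !scale1r.
exact: addr_sub_telescope.
Qed.

Lemma mixed_rem_unif (psi : G -> Y) (X1 X2 : R -> G) (g0 : G) :
  one_param_subgroup mul X1 -> one_param_subgroup mul X2 ->
  LUCn_loc mul inv one 1 psi -> unif_cvg0_near (mixed_rem psi X1 X2) g0.
Proof.
move=> hX1 hX2 psi1.
have hyp1 := LUCn_loc_taylor_hyp hX1 psi1.
have hyp2 := LUCn_loc_taylor_hyp hX2 psi1.
have [Va Va0 rem1_small] := taylor_rem_unif g0 hX1 hyp1.
have [Vb Vb0 rem2_small] := taylor_rem_unif g0 hX2 hyp2.
have [Vc Vc0 D2_small] := luc_loc_unif_cvg0 g0 hX1 (hyp2.1 1%N (leqnn 1)).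
have [Vd [W [Vd0 W1 _ VdW]]] := nbhs_mul_split Vb0.
exists (Va `&` Vc `&` Vd); first by apply: filterI; first apply: filterI.
move=> U U0.
have [U1 U10 HU1] := nbhs0_add_split U0.
have [U2 U20 HU2] := nbhs0_add_split U10.
near=> t => g [[Vag Vcg] Vdg].
have t0 : t != 0 by near: t; apply/near0P; exists 1 => // h h0 _.
have rem1_U1 : forall g, Va g -> U1 (t ^- 1 *: taylor_rem 1 psi X1 g t).
  by near: t; exact: rem1_small.
have rem2_U2 : forall g, Vb g -> U2 (t ^- 1 *: taylor_rem 1 psi X2 g t).
  by near: t; exact: rem2_small.
have D2_U2 : forall g, Vc g -> U2 (Dl mul psi X2 (mul g (X1 t)) - Dl mul psi X2 g).
  by near: t; exact: D2_small.
have W_X1t : W (X1 t) by near: t; exact: near0_one_param_subgroup.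
rewrite expr1 in rem1_U1 rem2_U2.
rewrite mixed_remE //; apply: HU1; last exact: rem1_U1.
by apply: HU2; [apply: rem2_U2; exact: VdW | exact: D2_U2].
Unshelve. all: by end_near.
Qed.

End TopologicalGroup.

Unset Implicit Arguments.

Theorem proposition2p2 (R : realType) (G : topologicalType) (Y : tvsType R)
  (mul : G -> G -> G) (inv : G -> G) (one : G)
  (HG : is_topological_group mul inv one) (HY : hausdorff_space Y)
  (n : nat) (hn : (0 < n)%N) (phi : G -> Y)
  (hphi : LUCn_loc mul inv one n phi) :
  (exists chi1 : G -> (R -> G) -> R -> Y,
    (forall g X t, one_param_subgroup mul X ->
       phi (mul g (X t)) =
         \sum_(j < n.+1) ((t ^+ j / (j`!)%:R) *: Dl_pow mul j X phi g)
         + t ^+ n *: chi1 g X t) /\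
    (forall g X, one_param_subgroup mul X ->
       chi1 g X t @[t --> (0 : R)^'] --> (0 : Y)) /\
    (forall (g0 : G) (X : R -> G), one_param_subgroup mul X ->
       exists2 V0 : set G, nbhs g0 V0 &
         forall U : set Y, nbhs (0 : Y) U ->
           \forall t \near (0 : R)^', forall g, V0 g -> U (chi1 g X t))) /\
  (exists chi2 : G -> (R -> G) -> (R -> G) -> R -> Y,
    (forall g X1 X2 t, one_param_subgroup mul X1 -> one_param_subgroup mul X2 ->
       phi (mul (mul g (X1 t)) (X2 t)) =
         phi g + t *: (Dl mul phi X1 g + Dl mul phi X2 g) + t *: chi2 g X1 X2 t) /\
    (forall g X1 X2, one_param_subgroup mul X1 -> one_param_subgroup mul X2 ->
       chi2 g X1 X2 t @[t --> (0 : R)^'] --> (0 : Y)) /\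
    (forall (g0 : G) (X1 X2 : R -> G), one_param_subgroup mul X1 -> one_param_subgroup mul X2 ->
       exists2 V0 : set G, nbhs g0 V0 &
         forall U : set Y, nbhs (0 : Y) U ->
           \forall t \near (0 : R)^', forall g, V0 g -> U (chi2 g X1 X2 t))).
Proof.
have rem_unif g0 X (hX : one_param_subgroup mul X) :=
  taylor_rem_unif HG g0 hX (LUCn_loc_taylor_hyp hX hphi).
have mixed_unif g0 X1 X2 (hX1 : one_param_subgroup mul X1) (hX2 : one_param_subgroup mul X2) :=
  mixed_rem_unif HG g0 hX1 hX2 (LUCn_loc_le hn hphi).
split.
  exists (fun g X t => t ^- n *: taylor_rem mul n phi X g t); split; [|split].
  - by move=> g X t hX; exact: (taylor_expansion HG).
  - by move=> g X hX; exact: unif_cvg0_near_cvg (rem_unif g X hX).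
  - exact: rem_unif.
exists (fun g X1 X2 t => mixed_rem mul phi X1 X2 g t); split; [|split].
- by move=> g X1 X2 t hX1 hX2; exact: (mixed_expansion HG).
- by move=> g X1 X2 hX1 hX2; exact: unif_cvg0_near_cvg (mixed_unif g X1 X2 hX1 hX2).
- exact: mixed_unif.
Qed.
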